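(* Let $\Gamma=G_5$ be the graph with two vertices $V_\alpha,V_\beta$ joined by exactly four edges (no loops), with degrees $d_\alpha,d_\beta\in\mathbb{Z}$. The family $\mathcal{F}(G_5,(d_\alpha,d_\beta))$ is jumping if and only if $0\le d_\alpha\le 2$ and $0\le d_\beta\le 2$.
   Context: Let $\Gamma$ be a connected graph (loops and multiple edges allowed) with vertices $V_1,\dots,V_n$ and integers $d_1,\dots,d_n$. A nodal curve with dual graph $\Gamma$ and rational components is a curve $C$ obtained from the disjoint union of copies $\mathbb{P}^1_{V_i}$ of $\mathbb{P}^1$ by choosing, for each edge of $\Gamma$, a point on each of its endpoint copies (all chosen points distinct) and identifying these two points to a node. A line bundle on $C$ is equivalent to line bundles on each $\mathbb{P}^1_{V_i}$ together with, at each node, an identification of the two fibres (descent data, a scalar in $\mathbb{C}^*$ after trivialising); global sections are tuples of sections on the $\mathbb{P}^1$'s compatible with these identifications. The family $\mathcal{F}(\Gamma,(d_i))$ consists of all pairs $(C,L)$ with $C$ such a curve (any choice of node positions) and $L$ a line bundle on $C$ whose pullback to $\mathbb{P}^1_{V_i}$ has degree $d_i$ for all $i$ (any descent data). $\Gamma$ with degrees $(d_i)$ is called jumping if $h^0(C,L)$ is not constant on $\mathcal{F}(\Gamma,(d_i))$, and non-jumping otherwise. *)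

From HB Require Import structures.
From mathcomp Require Import all_boot all_order all_algebra.
From mathcomp Require Import complex.
From mathcomp Require Import Rstruct.
Set Implicit Arguments. Unset Strict Implicit. Unset Printing Implicit Defensive.
Import Order.TTheory GRing.Theory Num.Theory.
Local Open Scope ring_scope.

Definition Cx : fieldType := (Rdefinitions.R)[i].

Section G5.
Variable F : fieldType.

(* A point of P^1 is given by homogeneous coordinates (x : y), a nonzero pair. *)
Definition hpt_nonzero (x : F * F) : bool := (x.1 != 0) || (x.2 != 0).
Definition hpt_distinct (x y : F * F) : bool := x.1 * y.2 != x.2 * y.1.

(* n edges: node positions p_i on P^1_alpha, q_i on P^1_beta, all distinct
   on each component. *)
Definition node_positions (n : nat) (p : 'I_n -> F * F) : Prop :=
  (forall i, hpt_nonzero (p i)) /\ (forall i j, i != j -> hpt_distinct (p i) (p j)).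

(* dimension of H^0(P^1, O(d)) : homogeneous polynomials of degree d in (x,y) *)
Definition nsec (d : int) : nat := if d < 0 then 0%N else (absz d).+1.

(* value at the (representative of the) point x of the k-th monomial
   x^k y^(d-k) of degree d; this trivialises the fibre of O(d) at x. *)
Definition monoval (d : int) (k : nat) (x : F * F) : F :=
  x.1 ^+ k * x.2 ^+ (absz d - k)%N.

(* Matrix of the gluing conditions: a pair (s, t) of sections of O(d1) on
   P^1_alpha and O(d2) on P^1_beta (row vector of coefficients) is a global
   section of L iff for every node i, s(p_i) = lam_i * t(q_i), where lam_i
   is the descent data (a nonzero scalar) at node i. *)
Definition glue_mx (n : nat) (d1 d2 : int) (p q : 'I_n -> F * F)
    (lam : 'I_n -> F) : 'M[F]_(nsec d1 + nsec d2, n) :=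
  col_mx (\matrix_(k < nsec d1, i < n) monoval d1 k (p i))
         (\matrix_(k < nsec d2, i < n) (- (lam i * monoval d2 k (q i)))).

Definition h0 (n : nat) (d1 d2 : int) (p q : 'I_n -> F * F) (lam : 'I_n -> F)
  : nat := \rank (kermx (glue_mx d1 d2 p q lam)).

(* an element (C, L) of the family F(Gamma, (d1, d2)) for the graph with two
   vertices joined by n edges (no loops) *)
Definition in_family (n : nat) (p q : 'I_n -> F * F) (lam : 'I_n -> F) : Prop :=
  node_positions p /\ node_positions q /\ (forall i, lam i != 0).

Definition jumping_two_vertex (n : nat) (d1 d2 : int) : Prop :=
  exists (p q p' q' : 'I_n -> F * F) (lam lam' : 'I_n -> F),
    in_family p q lam /\ in_family p' q' lam' /\
    h0 d1 d2 p q lam <> h0 d1 d2 p' q' lam'.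

End G5.

Definition jumping_G5 (da db : int) : Prop := @jumping_two_vertex Cx 4 da db.

(* The global sections of L are the pairs of forms (s, t) of degrees (da, db)
   with s(p_i) = lam_i t(q_i) at the four nodes, so h^0 = nsec da + nsec db - r
   where r is the rank of the 4-column gluing matrix.  Evaluation of forms of
   degree d at 4 distinct points of P^1 has rank min(d+1, 4) (products of linear
   forms interpolate), so if either degree is negative or at least 3 the rank
   is min(nsec da + nsec db, 4) whatever the data.  If 0 <= db <= da <= 2, put
   all nodes at (x_i : 1) on both components: with lam = 1 the gluing matrix has
   rank da + 1, while with lam_i = x_i^(da+1) its rows span the evaluations of
   all forms of degree da + 1, of rank da + 2.  Swapping the two components
   (and inverting lam) preserves h^0, which handles db > da. *)

From mathcomp Require Import all_boot all_order all_algebra.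
From mathcomp Require Import complex Rstruct ring zify.
Set Implicit Arguments. Unset Strict Implicit. Unset Printing Implicit Defensive.
Import Order.TTheory GRing.Theory Num.Theory.
Local Open Scope ring_scope.

Section HomogeneousForms.
Variable F : fieldType.
Implicit Types (P Q : {poly F}) (x q : F * F).

Definition hhorner (d : nat) P x : F := \sum_(k < d.+1) P`_k * monoval d k x.

Lemma hhorner_dehomog d P x : x.2 != 0 -> (size P <= d.+1)%N ->
  hhorner d P x = x.2 ^+ d * P.[x.1 / x.2].
Proof.
move=> y0 sP; rewrite (horner_coef_wide _ sP) mulr_sumr; apply: eq_bigr => k _.
have kd : (k <= d)%N by rewrite -ltnS.
have -> : x.2 ^+ d = x.2 ^+ k * x.2 ^+ (d - k) by rewrite -exprD subnKC.
rewrite /monoval /= expr_div_n; field; exact: expf_neq0.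
Qed.

Lemma hhorner_at_infinity d P x : x.2 = 0 -> hhorner d P x = P`_d * x.1 ^+ d.
Proof.
move=> y0; rewrite /hhorner big_ord_recr /= big1 => [|k _].
  by rewrite /monoval /= subnn y0 expr0 mulr1 add0r.
by rewrite /monoval /= y0 expr0n subn_eq0 leqNgt ltn_ord !mulr0.
Qed.

Lemma coefM_add_sizes a b P Q : (size P <= a.+1)%N -> (size Q <= b.+1)%N ->
  (P * Q)`_(a + b) = P`_a * Q`_b.
Proof.
move=> sP sQ; have ab : (a < (a + b).+1)%N by rewrite ltnS leq_addr.
rewrite coefM (bigD1 (Ordinal ab)) //= addKn big1 ?addr0 // => j jna.
have {}jna : (j : nat) != a by apply: contra jna => /eqP ja; apply/eqP/val_inj.
have [ja|aj] := ltnP j a.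
  by rewrite [Q`__]nth_default ?mulr0 //; apply: leq_trans sQ _; lia.
by rewrite nth_default ?mul0r //; apply: leq_trans sP _; lia.
Qed.

Lemma hhornerM a b P Q x : (size P <= a.+1)%N -> (size Q <= b.+1)%N ->
  hhorner (a + b) (P * Q) x = hhorner a P x * hhorner b Q x.
Proof.
move=> sP sQ; have [y0|y0] := eqVneq x.2 0.
  by rewrite !hhorner_at_infinity // coefM_add_sizes // exprD; ring.
have sPQ : (size (P * Q)%R <= (a + b).+1)%N.
  by apply: leq_trans (size_polyMleq P Q) _; lia.
by rewrite !hhorner_dehomog // hornerM exprD; ring.
Qed.

Definition linform q : {poly F} := Poly [:: - q.1; q.2].

Lemma size_linform q : (size (linform q) <= 2)%N.
Proof. exact: size_Poly. Qed.

Lemma hhorner_linform_eq0 q x : (hhorner 1 (linform q) x == 0) = ~~ hpt_distinct q x.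
Proof.
rewrite /hhorner !big_ord_recr big_ord0 /= !coef_Poly /monoval /= add0r.
rewrite subn0 subnn expr0 !expr1 mul1r mulr1 mulNr addrC subr_eq0.
by rewrite /hpt_distinct negbK eq_sym mulrC [q.2 * _]mulrC.
Qed.

Lemma size_prod_linform (r : seq (F * F)) :
  (size (\prod_(q <- r) linform q)%R <= (size r).+1)%N.
Proof.
elim: r => [|q r IHr]; first by rewrite big_nil size_poly1.
rewrite big_cons; apply: leq_trans (size_polyMleq _ _) _.
have := leq_add (size_linform q) IHr; rewrite /=; lia.
Qed.

Lemma hhorner_prod_linform (r : seq (F * F)) x :
  hhorner (size r) (\prod_(q <- r) linform q) x = \prod_(q <- r) hhorner 1 (linform q) x.
Proof.
elim: r => [|q r IHr].
  by rewrite !big_nil /hhorner big_ord1 /monoval /= coefC eqxx !expr0 !mulr1.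
by rewrite !big_cons -IHr -hhornerM ?size_linform ?size_prod_linform.
Qed.

(* A point of P^1 other than x, used to pad interpolating forms up to degree. *)
Definition away x : F * F := if x.2 == 0 then (0, 1) else (1, 0).

Lemma hpt_distinct_away x : hpt_nonzero x -> hpt_distinct (away x) x.
Proof.
rewrite /away /hpt_distinct /hpt_nonzero; have [->|y0] := eqVneq x.2 0 => /=.
  by rewrite orbF mul0r mul1r eq_sym.
by rewrite mul1r mul0r.
Qed.

End HomogeneousForms.

Section EvaluationMatrix.
Variables (F : fieldType) (n : nat).
Implicit Types (p : 'I_n -> F * F) (f : {poly F}).

Definition evmx (d : int) p : 'M[F]_(nsec d, n) :=
  \matrix_(k < nsec d, i < n) monoval d k (p i).

Lemma node_positions_comp m p (g : 'I_m -> 'I_n) :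
  injective g -> node_positions p -> node_positions (p \o g).
Proof.
move=> g_inj [nz ds]; split=> [i|i j ij]; first exact: nz.
by apply: ds; apply: contra ij => /eqP /g_inj ->.
Qed.

Lemma poly_rV_mul_evmx (d : nat) f p : poly_rV f *m evmx d p = \row_i hhorner d f (p i).
Proof. by apply/rowP => i; rewrite !mxE; apply: eq_bigr => k _; rewrite !mxE. Qed.

Lemma interpolating_form (d : nat) p j : node_positions p -> (n <= d.+1)%N ->
  exists f, forall i, (hhorner d f (p i) == 0) = (i != j).
Proof.
move=> [nz ds] nd.
set r := [seq p i | i <- enum (predC1 j)] ++ nseq (d.+1 - n) (away (p j)).
have <- : size r = d.
  rewrite size_cat size_map size_nseq -cardE cardC1 card_ord.
  by have := ltn_ord j; lia.
exists (\prod_(q <- r) linform q) => i; rewrite hhorner_prod_linform prodf_seq_eq0.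
have [->|ij] := eqVneq i j; rewrite ?eqxx; apply/hasP.
  move=> [q]; rewrite mem_cat hhorner_linform_eq0 => /orP[/mapP[k]|/nseqP[-> _]].
    by rewrite mem_enum => kj ->; rewrite ds.
  by rewrite hpt_distinct_away.
exists (p i); first by rewrite mem_cat map_f ?mem_enum.
by rewrite hhorner_linform_eq0 /hpt_distinct mulrC eqxx.
Qed.

Lemma evmx_row_full (d : nat) p : node_positions p -> (n <= d.+1)%N ->
  row_full (evmx d p).
Proof.
move=> np nd; rewrite -sub1mx; apply/row_subP => j; rewrite row1.
have [f fj] := interpolating_form j np nd.
have cj : hhorner d f (p j) != 0 by rewrite fj eqxx.
have -> : 'e_j = (hhorner d f (p j))^-1 *: (poly_rV f *m evmx d p).
  apply/rowP => i; rewrite poly_rV_mul_evmx !mxE eqxx /=.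
  have [->|ij] := eqVneq i j; first by rewrite mulVf.
  by move: (fj i); rewrite ij => /eqP ->; rewrite mulr0.
exact/scalemx_sub/submxMl.
Qed.

End EvaluationMatrix.

Lemma rank_evmx (F : fieldType) n (d : int) (p : 'I_n -> F * F) :
  node_positions p -> \rank (evmx d p) = minn (nsec d) n.
Proof.
case: d => [d|d] np; last first.
  by rewrite (flatmx0 (evmx (Negz d) p : 'M_(0, n))) mxrank0 min0n.
have [nd|dn] := leqP n d.+1.
  by have /eqP -> := evmx_row_full np nd; rewrite /=; lia.
have sub_rank : (\rank (evmx d (p \o widen_ord (ltnW dn))) <= \rank (evmx d p))%N.
  have -> : evmx d (p \o widen_ord (ltnW dn)) = evmx d p *m colsub (widen_ord (ltnW dn)) 1%:M.
    by rewrite mulmx_colsub mulmx1; apply/matrixP => k i; rewrite !mxE.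
  exact: mxrankM_maxl.
have widen_inj : injective (widen_ord (ltnW dn)).
  by move=> k l /(congr1 val) kl; apply: val_inj.
have full := evmx_row_full (node_positions_comp widen_inj np) (leqnn _).
by rewrite (eqP full) in sub_rank; apply/anti_leq; rewrite rank_leq_row.
Qed.

Section Gluing.
Variables (F : fieldType) (n : nat).
Implicit Types (p q : 'I_n -> F * F) (lam : 'I_n -> F).

Lemma glue_mxE (d1 d2 : int) p q lam :
  glue_mx d1 d2 p q lam = col_mx (evmx d1 p) (evmx d2 q *m diag_mx (\row_i - lam i)).
Proof.
rewrite /glue_mx mul_mx_diag; congr col_mx; apply/matrixP => k i.
by rewrite !mxE mulrN mulrC.
Qed.

Lemma mxrank_mul_diag m (A : 'M[F]_(m, n)) (v : 'rV_n) :
  (forall i, v 0 i != 0) -> \rank (A *m diag_mx v) = \rank A.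
Proof.
move=> v0; apply/mxrankMfree/row_freeP; exists (diag_mx (\row_i (v 0 i)^-1)).
by rewrite mulmx_diag; apply/matrixP => i j; rewrite !mxE mulfV.
Qed.

Lemma mxrank_col_mxC m1 m2 (A : 'M[F]_(m1, n)) (B : 'M[F]_(m2, n)) :
  \rank (col_mx A B) = \rank (col_mx B A).
Proof. by rewrite -!addsmxE addsmxC. Qed.

Lemma mxrank_glue_mxC (d1 d2 : int) p q lam : (forall i, lam i != 0) ->
  \rank (glue_mx d1 d2 p q lam) = \rank (glue_mx d2 d1 q p (fun i => (lam i)^-1)).
Proof.
move=> lam0; rewrite -(@mxrank_mul_diag _ (glue_mx _ _ _ _ _) (\row_i - (lam i)^-1)) => [|i].
  2: by rewrite mxE oppr_eq0 invr_eq0.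
rewrite !glue_mxE mul_col_mx -mulmxA mulmx_diag mxrank_col_mxC.
have -> : \row_i ((\row_i - lam i) 0 i * (\row_i - (lam i)^-1) 0 i) = const_mx 1.
  by apply/rowP => i; rewrite !mxE mulrNN mulfV.
by rewrite diag_const_mx mulmx1.
Qed.

Lemma jumping_two_vertexC (d1 d2 : int) :
  jumping_two_vertex F n d1 d2 -> jumping_two_vertex F n d2 d1.
Proof.
have swap p q lam : in_family p q lam -> in_family q p (fun i => (lam i)^-1) /\
    h0 d2 d1 q p (fun i => (lam i)^-1) = h0 d1 d2 p q lam.
  move=> [np [nq lam0]]; split; first by split=> //; split=> // i; rewrite invr_eq0.
  by rewrite /h0 !mxrank_ker (mxrank_glue_mxC _ _ _ _ lam0); congr (_ - _)%N; exact: addnC.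
move=> [p [q [p' [q' [lam [lam' [/swap [f e] [/swap [f' e'] neq]]]]]]]].
by exists q, p, q', p', (fun i => (lam i)^-1), (fun i => (lam' i)^-1); rewrite e e'.
Qed.

Lemma mxrank_glue_mx_extremal (d1 d2 : int) p q lam : in_family p q lam ->
  (nsec d1 = 0 \/ n <= nsec d1)%N ->
  \rank (glue_mx d1 d2 p q lam) = minn (nsec d1 + nsec d2) n.
Proof.
move=> [np [nq lam0]] d1_ext; rewrite glue_mxE.
have rank_top := rank_evmx d1 np.
case: d1_ext => [d1_0|d1_big].
  have /eqP -> : evmx d1 p == 0 by rewrite -mxrank_eq0 rank_top d1_0 min0n.
  rewrite rank_col_0mx mxrank_mul_diag => [|i]; last by rewrite mxE oppr_eq0.
  by rewrite rank_evmx // d1_0.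
set B := evmx d2 q *m _.
have top_sub : (evmx d1 p <= col_mx (evmx d1 p) B)%MS by rewrite -addsmxE addsmxSl.
have := mxrankS top_sub; have := rank_leq_col (col_mx (evmx d1 p) B).
by rewrite rank_top; lia.
Qed.

Lemma not_jumping_two_vertex (d1 d2 : int) :
  (nsec d1 = 0 \/ n <= nsec d1)%N -> ~ jumping_two_vertex F n d1 d2.
Proof.
move=> d1_ext [p [q [p' [q' [lam [lam' [f [f' []]]]]]]]].
by rewrite /h0 !mxrank_ker !mxrank_glue_mx_extremal.
Qed.

Definition affine_pts (x : 'I_n -> F) (i : 'I_n) : F * F := (x i, 1).

Lemma monoval_affine (d : int) k (t : F) : monoval d k (t, 1) = t ^+ k.
Proof. by rewrite /monoval expr1n mulr1. Qed.

Lemma node_positions_affine (x : 'I_n -> F) : injective x -> node_positions (affine_pts x).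
Proof.
move=> x_inj; split=> [i|i j]; first by rewrite /hpt_nonzero oner_neq0 orbT.
by apply: contra => /eqP; rewrite /= mulr1 mul1r => /x_inj ->.
Qed.

Lemma mxrank_glue_mx_affine_const (a b : nat) (x : 'I_n -> F) : (b <= a)%N ->
  (\rank (glue_mx a b (affine_pts x) (affine_pts x) (fun=> 1%R)) <= a.+1)%N.
Proof.
move=> ba; apply: leq_trans (rank_leq_row (evmx a (affine_pts x))); apply: mxrankS.
have ba1 : (b < a.+1)%N by [].
rewrite col_mx_sub submx_refl /=.
have -> : \matrix_(k < nsec b, i < n) - (1 * monoval b k (affine_pts x i)) =
    - rowsub (widen_ord ba1) (evmx a (affine_pts x)).
  by apply/matrixP => k i; rewrite !mxE !monoval_affine mul1r.
by rewrite rowsubE -mulNmx submxMl.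
Qed.

Lemma mxrank_glue_mx_affine_twisted (a b : nat) (x : 'I_n -> F) :
  injective x -> (a.+2 <= n)%N ->
  (a.+2 <= \rank (glue_mx a b (affine_pts x) (affine_pts x) (fun i => (x i ^+ a.+1)%R)))%N.
Proof.
move=> x_inj an; have := rank_evmx a.+1 (node_positions_affine x_inj).
rewrite /= (minn_idPl an) => <-; apply: mxrankS; apply/row_subP => k.
rewrite /glue_mx; set L := \matrix_(_, _) - _.
have [ka|ak] := ltnP k a.+1.
  have -> : row k (evmx a.+1 (affine_pts x)) = row (Ordinal ka) (evmx a (affine_pts x)).
    by apply/rowP => i; rewrite !mxE !monoval_affine.
  by apply: submx_trans (row_sub _ _) _; rewrite -addsmxE addsmxSl.
have -> : row k (evmx a.+1 (affine_pts x)) = - row (ord0 : 'I_b.+1) L.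
  have ka1 : k = a.+1 :> nat by apply/eqP; rewrite eqn_leq ak andbT -ltnS (ltn_ord k).
  by apply/rowP => i; rewrite !mxE !monoval_affine ka1 expr0 mulr1 opprK.
rewrite -scaleN1r; apply/scalemx_sub; apply: submx_trans (row_sub _ _) _.
by rewrite -addsmxE addsmxSr.
Qed.

Lemma jumping_two_vertex_affine (a b : nat) (x : 'I_n -> F) :
  injective x -> (forall i, x i != 0) -> (b <= a)%N -> (a.+2 <= n)%N ->
  jumping_two_vertex F n a b.
Proof.
move=> x_inj x0 ba an; have np := node_positions_affine x_inj.
exists (affine_pts x), (affine_pts x), (affine_pts x), (affine_pts x).
exists (fun=> 1), (fun i => x i ^+ a.+1).
split; first by split=> //; split=> // _; exact: oner_neq0.
split; first by split=> //; split=> // i; exact: expf_neq0.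
rewrite /h0 !mxrank_ker.
have := mxrank_glue_mx_affine_const x ba; have := mxrank_glue_mx_affine_twisted b x_inj an.
have := rank_leq_row (glue_mx a b (affine_pts x) (affine_pts x) (fun i => x i ^+ a.+1)).
lia.
Qed.

End Gluing.

Lemma nsec_outside (d : int) (m : nat) :
  ~~ (0 <= d <= m%:Z) -> nsec d = 0%N \/ (m.+2 <= nsec d)%N.
Proof. by case: d => [d|d] /=; [rewrite lez_nat -ltnNge; right | left]. Qed.

Lemma succ_natr_inj : injective (fun i : 'I_4 => i.+1%:R : Cx).
Proof. by move=> i j /eqP; rewrite (@eqr_nat Cx) eqSS => /eqP /val_inj. Qed.

Theorem mainTheorem12 (da db : int) :
  jumping_G5 da db <-> ((0 <= da <= 2) /\ (0 <= db <= 2)).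
Proof.
rewrite /jumping_G5; split=> [J|[]].
  split; apply/negPn/negP => /(nsec_outside (m := 2)) out.
    exact: not_jumping_two_vertex out J.
  exact: not_jumping_two_vertex out (jumping_two_vertexC J).
case: da => [a|//] /andP[_]; rewrite lez_nat => a2.
case: db => [b|//] /andP[_]; rewrite lez_nat => b2.
wlog ba : a b a2 b2 / (b <= a)%N => [small|].
  have [|/ltnW ab] := leqP b a; first exact: small.
  exact/jumping_two_vertexC/small.
apply: jumping_two_vertex_affine succ_natr_inj _ ba _ => [i|]; last by rewrite ltnS.
by rewrite (@pnatr_eq0 Cx).
Qed.
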